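(* Let $d \geq 0$, let $\mathcal{H}$ be a $(d+1)$-dimensional complex Hilbert space, and let $(\ket{x})_{x \in X}$ be an orthonormal basis of $\mathcal{H}$; call the associated classical structure (the special commutative $\dagger$-Frobenius algebra whose comultiplication copies the basis, $\ket{x} \mapsto \ket{x}\otimes\ket{x}$) the $X$ structure, and the basis vectors the $X$-classical points. Let $\mathbb{G} = (X,\oplus,0)$ be a finite abelian group structure on $X$ (so of order $d+1$), and let $\mathbb{S}$ be a finite consistent system of $\mathbb{G}$-valued $\mathbb{Z}$-module equations $$\bigoplus_{r=1}^{M} n^s_r\, y_r = a^s, \qquad s = 1,\dots,S,$$ with $n^s_r \in \mathbb{Z}$ and $a^s \in \mathbb{G}$, which has no solution in $\mathbb{G}$. Then there exists a quasi-special commutative $\dagger$-Frobenius algebra $Z$ on $\mathcal{H}$ (the $Z$ structure) such that: (i) the $X$ and $Z$ structures are strongly complementary, so that the $X$-classical points form a subgroup $K$ of the abelian group $P$ of $Z$-phases; (ii) the subgroup $K$ of $X$-classical points is isomorphic to $\mathbb{G}$; (iii) the system $\mathbb{S}$ (with its constants $a^s$ regarded as elements of $K \leq P$ via this isomorphism) admits a solution $(y_r := \beta_r)_{r=1}^M$ in the group $P$ of $Z$-phases.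
   Context: A system $\bigoplus_{r=1}^{M} n^s_r y_r = a^s$ ($s=1,\dots,S$) of $\mathbb{Z}$-module equations valued in an abelian group $K$ is consistent if, writing $\underline{n}^s = (n^s_1,\dots,n^s_M) \in \mathbb{Z}^M$, for every $J \geq 1$, indices $s_1,\dots,s_J$ and integers $c_1,\dots,c_J$: $\sum_j c_j \underline{n}^{s_j} = \underline{0}$ in $\mathbb{Z}^M$ implies $\bigoplus_j c_j a^{s_j} = 0$ in $K$. If $K \leq P$, a solution in $P$ is a family $(\beta_r)_{r=1}^M$ of elements of $P$ satisfying all equations with $y_r := \beta_r$. A quasi-special commutative $\dagger$-Frobenius algebra on $\mathcal{H}$ consists of a commutative associative unital multiplication $\mu_Z:\mathcal{H}\otimes\mathcal{H}\to\mathcal{H}$ with unit state $\eta_Z$, satisfying the Frobenius law with respect to its adjoint $\mu_Z^\dagger$, and such that $\mu_Z \circ \mu_Z^\dagger$ is a non-zero scalar multiple of the identity. A phase state (a $Z$-phase) is a state $\ket{\psi}$ with $(\bra{\psi}\otimes \mathrm{id}_{\mathcal{H}})\circ \mu_Z^\dagger \circ \ket{\psi} = \eta_Z$; the $Z$-phases form an abelian group $P$ under $(\psi,\phi)\mapsto \mu_Z(\ket{\psi}\otimes\ket{\phi})$ with unit $\eta_Z$ (states identified up to global phase). The $X$ and $Z$ structures are strongly complementary if the multiplication/unit of $Z$ and the comultiplication/counit of $X$ satisfy the bialgebra laws (up to scalars); in that case the $X$-classical points are $Z$-phases and form a subgroup of $P$. *)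

From HB Require Import structures.
From mathcomp Require Import all_boot all_order all_algebra.
From mathcomp Require Import complex reals.
Set Implicit Arguments. Unset Strict Implicit. Unset Printing Implicit Defensive.
Import Order.TTheory GRing.Theory Num.Theory.
Local Open Scope ring_scope.

Section Systems.
Variable G : zmodType.
Variables (S M : nat).

Definition consistent_system (n : 'I_S -> 'I_M -> int) (a : 'I_S -> G) : Prop :=
  forall (J : nat) (idx : 'I_J -> 'I_S) (c : 'I_J -> int),
    (0 < J)%N ->
    (forall r : 'I_M, \sum_(j < J) c j * n (idx j) r = 0) ->
    \sum_(j < J) a (idx j) *~ c j = 0.

Definition has_solution_in (n : 'I_S -> 'I_M -> int) (a : 'I_S -> G) : Prop :=
  exists y : 'I_M -> G, forall s : 'I_S, \sum_(r < M) y r *~ n s r = a s.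
End Systems.

Section Frobenius.
Variable C : numClosedFieldType.
Variable X : finType.

(* states of H = C^X, written in the X basis *)
Definition state := X -> C.

Definition ket (x : X) : state := fun y => (y == x)%:R.

(* A multiplication mu : H (x) H -> H is given by its matrix entries
   mu k i j = <k| mu |i j>; its adjoint (the comultiplication) has entries
   <a b| mu^dagger |k> = (mu k a b)^*. *)
Definition mult (mu : X -> X -> X -> C) (u v : state) : state :=
  fun k => \sum_(i : X) \sum_(j : X) mu k i j * u i * v j.

Definition mu_commutative (mu : X -> X -> X -> C) : Prop :=
  forall k i j, mu k i j = mu k j i.

Definition mu_associative (mu : X -> X -> X -> C) : Prop :=
  forall k a b c, \sum_(p : X) mu k p c * mu p a b = \sum_(p : X) mu k a p * mu p b c.

Definition mu_unital (mu : X -> X -> X -> C) (eta : state) : Prop :=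
  forall u : state, mult mu eta u = u /\ mult mu u eta = u.

(* Frobenius law w.r.t. the adjoint:
   (id (x) mu) o (mu^dag (x) id) = mu^dag o mu = (mu (x) id) o (id (x) mu^dag),
   stated entrywise <a b| _ |c e>. *)
Definition mu_frobenius (mu : X -> X -> X -> C) : Prop :=
  forall a b c e,
    (\sum_(p : X) (mu c a p)^* * mu b p e = \sum_(k : X) (mu k a b)^* * mu k c e) /\
    (\sum_(p : X) mu a c p * (mu e p b)^* = \sum_(k : X) (mu k a b)^* * mu k c e).

Definition mu_quasi_special (mu : X -> X -> X -> C) : Prop :=
  exists z : C, z != 0 /\
    forall k l, \sum_(a : X) \sum_(b : X) mu k a b * (mu l a b)^* = z * (k == l)%:R.

Definition qs_comm_dagger_frobenius (mu : X -> X -> X -> C) (eta : state) : Prop :=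
  [/\ mu_commutative mu, mu_associative mu, mu_unital mu eta,
      mu_frobenius mu & mu_quasi_special mu].

(* Strong complementarity with the X structure (comultiplication |x> |-> |x>|x>,
   counit <x| |-> 1): the bialgebra laws between (mu, eta) and (delta_X, eps_X),
   each holding up to a non-zero scalar, stated entrywise in the X basis. *)
Definition strongly_complementary_X (mu : X -> X -> X -> C) (eta : state) : Prop :=
  (* delta_X o mu = (mu (x) mu) o (id (x) swap (x) id) o (delta_X (x) delta_X) *)
  (exists z : C, z != 0 /\
     forall a b i j, z * ((a == b)%:R * mu a i j) = mu a i j * mu b i j) /\
  (* delta_X o eta = eta (x) eta *)
  (exists z : C, z != 0 /\
     forall a b, z * ((a == b)%:R * eta a) = eta a * eta b) /\
  (* eps_X o mu = eps_X (x) eps_X *)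
  (exists z : C, z != 0 /\
     forall i j, \sum_(k : X) mu k i j = z) /\
  (* eps_X o eta = 1 (up to a non-zero scalar) *)
  (\sum_(k : X) eta k != 0).

(* Z-phases: (<psi| (x) id) o mu^dag o |psi> = eta *)
Definition is_phase (mu : X -> X -> X -> C) (eta psi : state) : Prop :=
  forall b : X,
    \sum_(a : X) (psi a)^* * (\sum_(i : X) (mu i a b)^* * psi i) = eta b.

Definition eq_up_to_phase (u v : state) : Prop :=
  exists l : C, `|l| = 1 /\ forall x, u x = l * v x.

Definition ppow (mu : X -> X -> X -> C) (eta u : state) (k : nat) : state :=
  iter k (mult mu u) eta.

(* the integer multiple n.beta in P, given beta and its inverse gamma in P *)
Definition zpow (mu : X -> X -> X -> C) (eta beta gamma : state) (z : int) : state :=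
  if (0 <= z) then ppow mu eta beta (absz z) else ppow mu eta gamma (absz z).

Definition psum (mu : X -> X -> X -> C) (eta : state) (M : nat) (f : 'I_M -> state)
  : state := foldr (fun r acc => mult mu (f r) acc) eta (enum 'I_M).

(* sigma : G -> {X-classical points} (via x |-> |sigma x>) is a group isomorphism
   onto the subgroup K of X-classical points of the phase group P *)
Definition iso_to_classical_points (G : finZmodType) (mu : X -> X -> X -> C)
  (eta : state) (sigma : G -> X) : Prop :=
  injective sigma /\ #|G| = #|X| /\
  eq_up_to_phase (ket (sigma 0)) eta /\
  forall g h : G,
    eq_up_to_phase (mult mu (ket (sigma g)) (ket (sigma h))) (ket (sigma (g + h))).

Definition solvable_in_phases (G : finZmodType) (mu : X -> X -> X -> C) (eta : state)
  (sigma : G -> X) (S M : nat) (n : 'I_S -> 'I_M -> int) (a : 'I_S -> G) : Prop :=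
  exists beta gamma : 'I_M -> state,
    (forall r, [/\ is_phase mu eta (beta r), is_phase mu eta (gamma r) &
                  eq_up_to_phase (mult mu (beta r) (gamma r)) eta]) /\
    forall s : 'I_S,
      eq_up_to_phase (psum mu eta (fun r => zpow mu eta (beta r) (gamma r) (n s r)))
                     (ket (sigma (a s))).
End Frobenius.
Arguments ket {C X} x _.

From HB Require Import structures.
From mathcomp Require Import all_boot all_order all_algebra.
From mathcomp Require Import all_fingroup all_solvable all_field all_character.
From mathcomp Require Import complex reals.
From mathcomp Require Import ring.
From Stdlib Require Import FunctionalExtensionality.
Set Implicit Arguments. Unset Strict Implicit. Unset Printing Implicit Defensive.
Import Order.TTheory GRing.Theory Num.Theory.
Local Open Scope ring_scope.

(* Take for Z the group algebra of G in the basis of group elements,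
   mu |g>|h> = |g + h>.  Its bialgebra laws with the copying structure X are
   immediate, and the basis vectors |g> are Z-phases forming a copy of G.  The
   Fourier transform over the dual group turns mu into pointwise multiplication,
   so the phases include the transforms of all functions from the dual group to
   the unit circle.  Evaluating the system at a character chi gives the system
   prod_r t_r^(n_sr) = chi(a_s) on the unit circle; consistency says that every
   integer relation between the equations holds for its right-hand sides, and as
   the unit circle is divisible, Smith normal form solves it.  The solutions for
   all characters assemble into phases solving the system in P. *)

Lemma sum_delta (R : pzSemiRingType) (T : finType) (c : T) (F : T -> R) :
  \sum_b (b == c)%:R * F b = F c.
Proof.
by rewrite (bigD1 c) //= eqxx mul1r big1 ?addr0 // => b /negbTE ->; rewrite mul0r.
Qed.

Lemma card_zmod_gt0 (G : finZmodType) : (0 < #|G|)%N.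
Proof. by apply/card_gt0P; exists 0. Qed.

Lemma eq_up_to_phaseW (C : numClosedFieldType) (X : finType) (u v : state C X) :
  u = v -> eq_up_to_phase u v.
Proof. by move->; exists 1; rewrite normr1; split=> // x; rewrite mul1r. Qed.

Section GroupAlgebra.
Variables (C : numClosedFieldType) (G : finZmodType).

Definition group_mu : G -> G -> G -> C := fun k i j => (k == i + j)%:R.
Definition group_eta : state C G := ket 0.

Lemma eq_add_sub (k a b : G) : (k == a + b) = (b == k - a).
Proof. by rewrite [RHS]eq_sym subr_eq addrC. Qed.

Lemma mult_group_muE (u v : state C G) k : mult group_mu u v k = \sum_a u a * v (k - a).
Proof.
apply: eq_bigr => a _.
under eq_bigr do rewrite /group_mu eq_add_sub -mulrA mulrCA.
by rewrite -mulr_sumr sum_delta.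
Qed.

Lemma mult_ket (g h : G) : mult group_mu (ket g) (ket h) = ket (g + h).
Proof.
apply: functional_extensionality => k; rewrite mult_group_muE.
under eq_bigr do rewrite /ket.
by rewrite sum_delta subr_eq addrC.
Qed.

Lemma group_mu_commutative : mu_commutative group_mu.
Proof. by move=> k i j; rewrite /group_mu addrC. Qed.

Lemma group_mu_associative : mu_associative group_mu.
Proof.
move=> k a b c.
under eq_bigr do rewrite /group_mu mulrC.
rewrite sum_delta.
under eq_bigr do rewrite /group_mu eq_add_sub.
by rewrite sum_delta [k - a == _]eq_sym -eq_add_sub addrA.
Qed.

Lemma group_mu_unital : mu_unital group_mu group_eta.
Proof.
move=> u; split; apply: functional_extensionality => k; rewrite mult_group_muE.
  under eq_bigr do rewrite /group_eta /ket.
  by rewrite sum_delta subr0.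
under eq_bigr do rewrite /group_eta /ket subr_eq0 eq_sym mulrC.
by rewrite sum_delta.
Qed.

Lemma group_mu_frobenius : mu_frobenius group_mu.
Proof.
have eq_frob (x y u v : G) : (y == x - u + v) = (u + y == x + v).
  by rewrite addrAC [LHS]eq_sym subr_eq [LHS]eq_sym [y + u]addrC.
move=> a b c e; split.
  transitivity ((b == c - a + e)%:R : C).
    under eq_bigr do rewrite /group_mu conjC_nat eq_add_sub.
    by rewrite sum_delta.
  under eq_bigr do rewrite /group_mu conjC_nat.
  by rewrite sum_delta eq_frob eq_sym.
transitivity ((e == a - c + b)%:R : C).
  under eq_bigr do rewrite /group_mu conjC_nat eq_add_sub.
  by rewrite sum_delta.
under eq_bigr do rewrite /group_mu conjC_nat.
by rewrite sum_delta eq_frob eq_sym.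
Qed.

Lemma group_mu_quasi_special : mu_quasi_special group_mu.
Proof.
exists #|G|%:R; split; first by rewrite pnatr_eq0 -lt0n card_zmod_gt0.
move=> k l; transitivity (\sum_(a : G) ((l == k)%:R : C)).
  apply: eq_bigr => a _.
  under eq_bigr do rewrite /group_mu conjC_nat eq_add_sub.
  by rewrite sum_delta addrC subrK.
by rewrite sumr_const mulr_natl [l == k]eq_sym cardT -cardE.
Qed.

Lemma group_frobenius : qs_comm_dagger_frobenius group_mu group_eta.
Proof.
split; [exact: group_mu_commutative | exact: group_mu_associative |
  exact: group_mu_unital | exact: group_mu_frobenius | exact: group_mu_quasi_special].
Qed.

Lemma group_strongly_complementary : strongly_complementary_X group_mu group_eta.
Proof.
have eq_both (a b c : G) : (a == b) && (a == c) = (a == c) && (b == c).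
  by apply/andP/andP=> [[/eqP-> ->]|[/eqP-> /eqP->]].
split; [|split; [|split]].
- exists 1; split=> [|a b i j]; first exact: oner_neq0.
  by rewrite mul1r /group_mu -!natrM !mulnb eq_both.
- exists 1; split=> [|a b]; first exact: oner_neq0.
  by rewrite mul1r /group_eta /ket -!natrM !mulnb eq_both.
- exists 1; split=> [|i j]; first exact: oner_neq0.
  rewrite /group_mu; under eq_bigr do rewrite -[_%:R]mulr1.
  by rewrite sum_delta.
- rewrite /group_eta /ket.
  under eq_bigr do rewrite -[_%:R]mulr1.
  by rewrite sum_delta oner_neq0.
Qed.

Lemma is_phase_ket (x : G) : is_phase group_mu group_eta (ket x).
Proof.
move=> b; rewrite /ket.
under eq_bigr do rewrite conjC_nat.
rewrite sum_delta.
under eq_bigr do rewrite /group_mu conjC_nat mulrC.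
by rewrite sum_delta -{1}[x]addr0 (inj_eq (addrI x)) eq_sym.
Qed.

Lemma iso_classical_points_id : iso_to_classical_points group_mu group_eta id.
Proof.
split=> //; split=> //; split=> [|g h]; apply: eq_up_to_phaseW => //.
exact: mult_ket.
Qed.

End GroupAlgebra.
Arguments group_mu {C G}.
Arguments group_eta {C G}.

Lemma prodr_expz (F : fieldType) (I : Type) (r : seq I) (P : pred I) (f : I -> F) (z : int) :
  (forall i, f i != 0) -> (\prod_(i <- r | P i) f i) ^ z = \prod_(i <- r | P i) f i ^ z.
Proof.
move=> nz_f; elim: r => [|i r IHr]; first by rewrite !big_nil exp1rz.
rewrite !big_cons; case: (P i) => //.
rewrite exprzMl ?IHr // unitfE ?nz_f // prodf_seq_neq0.
by elim: (r) => //= j r' ->; rewrite nz_f implybT.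
Qed.

Lemma expz_sumr (F : fieldType) (I : Type) (r : seq I) (P : pred I) (f : I -> int) (x : F) :
  x != 0 -> x ^ (\sum_(i <- r | P i) f i) = \prod_(i <- r | P i) x ^ f i.
Proof.
by move=> nz_x; apply: (big_morph _ (exprzDr _) (expr0z x)); rewrite unitfE.
Qed.

Lemma norm_expz_eq1 (F : numFieldType) (x : F) (z : int) : `|x| = 1 -> `|x ^ z| = 1.
Proof.
move=> x1; case: z => m; first by rewrite normrX x1 expr1n.
by rewrite NegzE -invr_expz normfV normrX x1 expr1n invr1.
Qed.

Lemma unit_circle_expz_root (C : numClosedFieldType) (b : C) (z : int) :
  `|b| = 1 -> z != 0 -> exists v, `|v| = 1 /\ v ^ z = b.
Proof.
move=> b1.
have root_norm m : (0 < m)%N -> `|m.-root b| = 1.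
  move=> m_gt0; apply/eqP; rewrite -(pexpr_eq1 (n := m)) ?normr_ge0 -?lt0n //.
  by rewrite -normrX rootCK // b1.
case: z => m nz_m.
  have m_gt0 : (0 < m)%N by rewrite lt0n; apply: contraNneq nz_m => ->.
  by exists (m.-root b); rewrite -exprnP rootCK // root_norm.
exists (m.+1.-root b)^-1; rewrite normfV root_norm // invr1; split=> //.
by rewrite NegzE -invr_expz -exprnP exprVn invrK rootCK.
Qed.

Section UnitCircleSystems.
Variable C : numClosedFieldType.

Definition mxexpz p q (A : 'M[int]_(p, q)) (v : 'I_q -> C) : 'I_p -> C :=
  fun i => \prod_j v j ^ A i j.

Lemma mxexpz_mul p q r (A : 'M[int]_(p, q)) (B : 'M[int]_(q, r)) (v : 'I_r -> C) :
  (forall j, v j != 0) -> mxexpz (A *m B) v = mxexpz A (mxexpz B v).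
Proof.
move=> nz_v; apply: functional_extensionality => i; rewrite /mxexpz.
have nz_vB k j : v j ^ B k j != 0 by exact: expfz_neq0.
under [RHS]eq_bigr => k _ do rewrite (prodr_expz _ _ _ (nz_vB k)).
rewrite exchange_big /=; apply: eq_bigr => j _.
rewrite mxE expz_sumr //; apply: eq_bigr => k _.
by rewrite exprz_exp mulrC.
Qed.

Lemma mxexpz1 p (v : 'I_p -> C) : mxexpz 1%:M v = v.
Proof.
apply: functional_extensionality => i; rewrite /mxexpz (bigD1 i) //= big1 ?mulr1.
  by rewrite mxE eqxx expr1z.
by move=> j ji; rewrite mxE eq_sym (negbTE ji) mulr0n expr0z.
Qed.

Lemma norm_mxexpz p q (A : 'M[int]_(p, q)) (v : 'I_q -> C) :
  (forall j, `|v j| = 1) -> forall i, `|mxexpz A v i| = 1.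
Proof.
by move=> v1 i; rewrite normr_prod big1 // => j _; exact: norm_expz_eq1.
Qed.

Lemma diag_mxexpz_solvable p q (D : 'M[int]_(p, q)) (b : 'I_p -> C) :
  (forall (i : 'I_p) (j : 'I_q), (i : nat) != j -> D i j = 0) ->
  (forall i, `|b i| = 1) ->
  (forall i, (forall j, D i j = 0) -> b i = 1) ->
  exists2 u, forall j, `|u j| = 1 & mxexpz D u = b.
Proof.
move=> diagD b1 b_zero_row.
have root_j (j : 'I_q) : exists v : C, `|v| = 1 /\
    forall i : 'I_p, (i : nat) = j -> D i j != 0 -> v ^ D i j = b i.
  case: (ltnP j p) => [jp|pj]; last first.
    by exists 1; rewrite normr1; split=> // i ij; move: (ltn_ord i); rewrite ij ltnNge pj.
  have [Djj0|nz_Djj] := eqVneq (D (Ordinal jp) j) 0.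
    exists 1; rewrite normr1; split=> // i ij.
    by rewrite (_ : i = Ordinal jp) ?Djj0 ?eqxx //; apply: val_inj.
  have [v [v1 Dv]] := unit_circle_expz_root (b1 (Ordinal jp)) nz_Djj.
  by exists v; split=> // i ij; rewrite (_ : i = Ordinal jp) //; apply: val_inj.
have [u hu] := fin_all_exists root_j.
exists u => [j|]; first by case: (hu j).
apply: functional_extensionality => i; rewrite /mxexpz.
have [j Dij|zero_row] := pickP (fun j => D i j != 0); last first.
  rewrite b_zero_row => [|j]; last by apply/eqP/negbFE/zero_row.
  by rewrite big1 // => j _; rewrite (eqP (negbFE (zero_row j))) expr0z.
have ij : (i : nat) = j by apply/eqP; apply: contraNT Dij => /diagD ->.
rewrite (bigD1 j) //= big1 ?mulr1; first by case: (hu j) => _ ->.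
move=> k kj; rewrite diagD ?expr0z // ij.
by apply: contra kj => /eqP jk; apply/eqP/val_inj.
Qed.

(* Smith normal form reduces this to the diagonal case, which holds because the
   unit circle is divisible. *)
Lemma unit_circle_system_solvable S M (n : 'I_S -> 'I_M -> int) (w : 'I_S -> C) :
  (forall s, `|w s| = 1) ->
  (forall c : 'I_S -> int, (forall r, \sum_s c s * n s r = 0) -> \prod_s w s ^ c s = 1) ->
  exists2 t : 'I_M -> C, forall r, `|t r| = 1 & forall s, \prod_r t r ^ n s r = w s.
Proof.
move=> w1 w_rel; pose Nm := \matrix_(s, r) n s r.
have [L uL [R uR [d _ NmE]]] := int_Smith_normal_form Nm.
set D := \matrix_(i, j) _ in NmE.
have nz_w s : w s != 0 by rewrite -normr_eq0 w1 oner_eq0.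
pose b := mxexpz (invmx L) w.
have b_zero_row i : (forall j, D i j = 0) -> b i = 1.
  move=> Di0; apply: w_rel => r.
  have : (invmx L *m Nm) i r = 0.
    by rewrite NmE !mulmxA mulVmx // mul1mx mxE big1 // => k _; rewrite Di0 mul0r.
  by rewrite mxE; under eq_bigr do rewrite mxE.
have diagD (i : 'I_S) (j : 'I_M) : (i : nat) != j -> D i j = 0.
  by rewrite mxE => /negbTE ->.
have [u u1 Du] := diag_mxexpz_solvable diagD (norm_mxexpz _ w1) b_zero_row.
have nz_u j : u j != 0 by rewrite -normr_eq0 u1 oner_eq0.
exists (mxexpz (invmx R) u) => [|s]; first exact: norm_mxexpz.
have -> : \prod_r mxexpz (invmx R) u r ^ n s r = mxexpz Nm (mxexpz (invmx R) u) s.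
  by apply: eq_bigr => r _; rewrite mxE.
rewrite -mxexpz_mul // NmE -mulmxA mulmxV // mulmx1 mxexpz_mul // Du.
by rewrite /b -mxexpz_mul // mulmxV // mxexpz1.
Qed.

End UnitCircleSystems.

Lemma closed_prim_root_exists (F : closedFieldType) n :
  (0 < n)%N -> n%:R != 0 :> F -> exists z : F, n.-primitive_root z.
Proof.
move=> n_gt0 nz_n.
pose p : {poly F} := 'X^n - 1; have [r Dp] := closed_field_poly_normal p.
rewrite (monicP _) ?monicXnsubC // scale1r in Dp.
have rn1 : all n.-unity_root r by apply/allP=> z; rewrite -root_prod_XsubC -Dp.
have sz_r : (n < (size r).+1)%N.
  by rewrite -(size_prod_XsubC r id) -Dp size_XnsubC.
have [|z] := hasP (has_prim_root n_gt0 rn1 _ sz_r); last by exists z.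
by rewrite -separable_prod_XsubC -Dp separable_Xn_sub_1.
Qed.

(* The irreducible characters of G over algC take values in the #|G|-th roots of
   unity; substituting a primitive #|G|-th root of unity of C for one of algC
   transports them to C. *)
Lemma dual_group_exists (C : numClosedFieldType) (G : finZmodType) :
  exists ch : 'I_#|G| -> G -> C,
    [/\ forall i x y, ch i (x + y) = ch i x * ch i y,
        forall i x, `|ch i x| = 1 & injective ch].
Proof.
have N_gt0 := card_zmod_gt0 G.
have [zA pzA] := C_prim_root_exists N_gt0.
have [zC pzC] : exists z : C, #|G|.-primitive_root z.
  by apply: closed_prim_root_exists; rewrite // pnatr_eq0 -lt0n.
have transport a b : (zA ^+ a == zA ^+ b) = (zC ^+ a == zC ^+ b).
  by rewrite (eq_prim_root_expr pzA) (eq_prim_root_expr pzC).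
pose gG := [set: G]%G.
have abG : abelian gG by apply/centsP=> x _ y _; exact: addrC.
have linG i : 'chi[gG]_i \is a linear_char := char_abelianP _ abG i.
have inG (x : G) : x \in gG by rewrite inE.
have chi_unity i (x : G) : 'chi[gG]_i x ^+ #|G| = 1.
  by rewrite -lin_charX // -(cardsT G) expg_cardG // lin_char1.
pose k i x : 'I_#|G| := sval (prim_rootP pzA (chi_unity i x)).
have chiE i x : 'chi[gG]_i x = zA ^+ k i x by rewrite /k; case: prim_rootP.
have nirrG : Nirr gG = #|G|.
  by rewrite NirrE; move: abG; rewrite card_classes_abelian cardsT => /eqP.
have zC1 : `|zC| = 1.
  apply/eqP; rewrite -(pexpr_eq1 (n := #|G|)) -?lt0n ?normr_ge0 //.
  by rewrite -normrX (prim_expr_order pzC) normr1.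
exists (fun i x => zC ^+ k (cast_ord (esym nirrG) i) x); split.
- move=> i x y; apply/eqP; rewrite -exprD -transport exprD -!chiE.
  by rewrite (lin_charM (linG _)) ?inG.
- by move=> i x; rewrite normrX zC1 expr1n.
move=> i j ch_ij; apply: (@cast_ord_inj _ _ (esym nirrG)); apply: irr_inj.
apply/cfunP=> x; apply/eqP; rewrite !chiE transport; apply/eqP.
exact: (congr1 (fun f => f x) ch_ij).
Qed.

Lemma sum_hom_eq0 (F : idomainType) (G : finZmodType) (phi : G -> F) (x0 : G) :
  {morph phi : x y / x + y >-> x * y} -> phi x0 != 1 -> \sum_x phi x = 0.
Proof.
move=> phiD phi_x0; set s := \sum_x _.
have : s = phi x0 * s.
  by rewrite /s mulr_sumr (reindex_inj (addrI x0)); apply: eq_bigr => x _; rewrite phiD.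
move/eqP; rewrite -subr_eq0 -{1}[s]mul1r -mulrBl mulf_eq0 subr_eq0 eq_sym.
by rewrite (negbTE phi_x0) => /eqP.
Qed.

Section DualGroup.
Variables (C : numClosedFieldType) (G : finZmodType) (ch : 'I_#|G| -> G -> C).
Hypothesis chD : forall i x y, ch i (x + y) = ch i x * ch i y.
Hypothesis ch_norm : forall i x, `|ch i x| = 1.
Hypothesis ch_inj : injective ch.
Local Notation N := #|G|.

Lemma natr_card_neq0 : N%:R != 0 :> C.
Proof. by rewrite pnatr_eq0 -lt0n card_zmod_gt0. Qed.

Lemma ch_neq0 i x : ch i x != 0.
Proof. by rewrite -normr_eq0 ch_norm oner_eq0. Qed.

Lemma ch0 i : ch i 0 = 1.
Proof.
by apply: (mulfI (ch_neq0 i 0)); rewrite -chD addr0 mulr1.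
Qed.

Lemma ch_conj i x : (ch i x)^* = (ch i x)^-1.
Proof.
by apply: (mulfI (ch_neq0 i x)); rewrite mulfV ?ch_neq0 // -normCK ch_norm expr1n.
Qed.

Lemma chN i x : ch i (- x) = (ch i x)^*.
Proof.
by apply: (mulfI (ch_neq0 i x)); rewrite -chD subrr ch0 ch_conj mulfV ?ch_neq0.
Qed.

Lemma ch_sum i (I : finType) (f : I -> G) : ch i (\sum_j f j) = \prod_j ch i (f j).
Proof. exact: (big_morph (ch i) (chD i) (ch0 i)). Qed.

Lemma ch_mulrz i x z : ch i (x *~ z) = ch i x ^ z.
Proof.
have ch_muln m : ch i (x *+ m) = ch i x ^+ m.
  by elim: m => [|m IHm]; rewrite ?mulr0n ?ch0 // mulrS chD IHm exprS.
case: z => m; first by rewrite -exprnP -ch_muln.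
by rewrite NegzE mulrNz chN ch_conj -invr_expz -exprnP -ch_muln.
Qed.

Lemma ch_orthogonal i j : \sum_x ch i x * (ch j x)^* = (N * (i == j))%:R.
Proof.
have [<-|nij] := eqVneq i j.
  under eq_bigr do rewrite -normCK ch_norm expr1n.
  by rewrite sumr_const muln1.
have [x0 ch_x0] : exists x0, ch i x0 != ch j x0.
  apply/existsP; apply: contraR nij; rewrite negb_exists => /forallP ch_ij.
  by apply/eqP/ch_inj/functional_extensionality => x; apply/eqP/negPn; exact: ch_ij.
rewrite muln0; apply: (@sum_hom_eq0 _ _ _ x0).
  by move=> x y; rewrite !chD rmorphM /= mulrACA.
apply: contra ch_x0 => /eqP ch_x0_1; apply/eqP.
by rewrite -[LHS]mulr1 -[1 in LHS](mulVf (ch_neq0 j x0)) -ch_conj mulrA ch_x0_1 mul1r.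
Qed.

(* The character table is, up to the factor N, a unitary matrix, so its columns are
   orthogonal as well as its rows. *)
Lemma ch_orthogonal_dual x y : \sum_i (ch i x)^* * ch i y = (N * (x == y))%:R.
Proof.
pose U : 'M[C]_N := \matrix_(i, j) ch i (enum_val j).
pose V : 'M[C]_N := \matrix_(i, j) (N%:R^-1 * (U j i)^*).
have UV : U *m V = 1%:M.
  apply/matrixP => i j; rewrite !mxE.
  under eq_bigr do rewrite !mxE mulrCA.
  rewrite -mulr_sumr -(big_enum_val (fun x => ch i x * (ch j x)^*)) /=.
  by rewrite ch_orthogonal natrM mulrA mulVf ?natr_card_neq0 // mul1r; case: (i == j).
have := congr1 (fun A : 'M[C]_N => A (enum_rank x) (enum_rank y)) (mulmx1C UV).
rewrite !mxE; under eq_bigr do rewrite !mxE -mulrA.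
rewrite !enum_rankK -mulr_sumr (inj_eq enum_rank_inj) => VU.
apply: (mulfI (invr_neq0 natr_card_neq0)).
by rewrite VU natrM mulrA mulVf ?natr_card_neq0 // mul1r; case: (x == y).
Qed.

Definition fourier_inv (t : 'I_N -> C) : state C G :=
  fun x => N%:R^-1 * \sum_i t i * (ch i x)^*.

Lemma fourier_inv_conv (t u : 'I_N -> C) k :
  \sum_a fourier_inv t a * fourier_inv u (k - a) = fourier_inv (fun i => t i * u i) k.
Proof.
have ch_sub i a : (ch i (k - a))^* = (ch i k)^* * ch i a.
  by rewrite chD rmorphM /= chN conjCK.
rewrite /fourier_inv (eq_bigr (fun a => N%:R^-1 * N%:R^-1 * \sum_i \sum_j
    (t i * u j * (ch j k)^*) * (ch j a * (ch i a)^*))); last first.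
  move=> a _; rewrite mulrACA big_distrlr /=; congr (_ * _).
  by apply: eq_bigr => i _; apply: eq_bigr => j _; rewrite ch_sub; ring.
rewrite -mulr_sumr exchange_big /=.
rewrite (eq_bigr (fun i => t i * u i * (ch i k)^* * N%:R)); last first.
  move=> i _; rewrite exchange_big /=.
  under eq_bigr do rewrite -mulr_sumr ch_orthogonal.
  rewrite (bigD1 i) //= eqxx muln1 big1 ?addr0 // => j /negbTE ->.
  by rewrite muln0 mulr0.
by rewrite -mulr_suml; field; exact: natr_card_neq0.
Qed.

Lemma mult_fourier_inv t u :
  mult group_mu (fourier_inv t) (fourier_inv u) = fourier_inv (fun i => t i * u i).
Proof.
by apply: functional_extensionality => k; rewrite mult_group_muE fourier_inv_conv.
Qed.

Lemma fourier_inv_ch g : fourier_inv (fun i => ch i g) = ket g.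
Proof.
apply: functional_extensionality => x; rewrite /fourier_inv /ket.
under eq_bigr do rewrite mulrC.
by rewrite ch_orthogonal_dual natrM mulrA mulVf ?natr_card_neq0 // mul1r.
Qed.

Lemma fourier_inv1 : fourier_inv (fun _ => 1) = group_eta.
Proof.
rewrite /group_eta -fourier_inv_ch; congr fourier_inv.
by apply: functional_extensionality => i; rewrite ch0.
Qed.

Lemma conj_fourier_inv t x : (fourier_inv t x)^* = fourier_inv (fun i => (t i)^*) (- x).
Proof.
rewrite /fourier_inv rmorphM /= rmorph_sum /= fmorphV rmorph_nat; congr (_ * _).
by apply: eq_bigr => i _; rewrite rmorphM /= chN !conjCK.
Qed.

Lemma is_phase_fourier_inv t :
  (forall i, `|t i| = 1) -> is_phase group_mu group_eta (fourier_inv t).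
Proof.
move=> t1 b.
transitivity (\sum_a fourier_inv (fun i => (t i)^*) (- a) * fourier_inv t (b - - a)).
  apply: eq_bigr => a _; rewrite conj_fourier_inv opprK addrC; congr (_ * _).
  under eq_bigr do rewrite /group_mu conjC_nat.
  exact: sum_delta.
rewrite (reindex_inj (@oppr_inj G)) /=.
under eq_bigr do rewrite opprK.
rewrite fourier_inv_conv -fourier_inv1; congr fourier_inv.
by apply: functional_extensionality => i; rewrite -normCKC t1 expr1n.
Qed.

Lemma ppow_fourier_inv t m :
  ppow group_mu group_eta (fourier_inv t) m = fourier_inv (fun i => t i ^+ m).
Proof.
elim: m => [|m IHm] /=; first by rewrite -fourier_inv1.
rewrite /ppow /= -/(ppow _ _ _ m) IHm mult_fourier_inv; congr fourier_inv.
by apply: functional_extensionality => i; rewrite exprS.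
Qed.

Lemma zpow_fourier_inv t z :
  zpow group_mu group_eta (fourier_inv t) (fourier_inv (fun i => (t i)^-1)) z
  = fourier_inv (fun i => t i ^ z).
Proof.
rewrite /zpow; case: z => m /=; rewrite ppow_fourier_inv //.
rewrite mult_fourier_inv; congr fourier_inv; apply: functional_extensionality => i.
by rewrite -exprS exprVn NegzE -invr_expz -exprnP.
Qed.

Lemma psum_fourier_inv M (f : 'I_M -> 'I_N -> C) :
  psum group_mu group_eta (fun r => fourier_inv (f r))
  = fourier_inv (fun i => \prod_(r < M) f r i).
Proof.
rewrite /psum (_ : (fun i => _) = (fun i => \prod_(r <- enum 'I_M) f r i)); last first.
  by apply: functional_extensionality => i; rewrite big_enum.
elim: (enum 'I_M) => [|r rs IHrs] /=.
  by rewrite -fourier_inv1; congr fourier_inv; apply: functional_extensionality => i; rewrite big_nil.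
rewrite IHrs mult_fourier_inv; congr fourier_inv; apply: functional_extensionality => i.
by rewrite big_cons.
Qed.

Lemma consistent_ch_relation S M (n : 'I_S -> 'I_M -> int) (a : 'I_S -> G) i (c : 'I_S -> int) :
  consistent_system n a -> (forall r, \sum_s c s * n s r = 0) ->
  \prod_s ch i (a s) ^ c s = 1.
Proof.
case: S n a c => [|S] n a c cons_na rel_c; first by rewrite big_ord0.
rewrite -[RHS](ch0 i) -(cons_na _ id c (ltn0Sn _) rel_c) ch_sum.
by apply: eq_bigr => s _; rewrite ch_mulrz.
Qed.

Lemma solvable_in_phases_dual S M (n : 'I_S -> 'I_M -> int) (a : 'I_S -> G)
    (T : 'I_N -> 'I_M -> C) :
  (forall i r, `|T i r| = 1) -> (forall i s, \prod_r T i r ^ n s r = ch i (a s)) ->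
  solvable_in_phases (@group_mu C G) group_eta id n a.
Proof.
move=> T1 TE; have nz_T i r : T i r != 0 by rewrite -normr_eq0 T1 oner_eq0.
exists (fun r => fourier_inv (fun i => T i r)), (fun r => fourier_inv (fun i => (T i r)^-1)).
split=> [r|s]; first split.
- exact: is_phase_fourier_inv.
- by apply: is_phase_fourier_inv => i; rewrite normfV T1 invr1.
- apply: eq_up_to_phaseW; rewrite mult_fourier_inv -fourier_inv1; congr fourier_inv.
  by apply: functional_extensionality => i; rewrite mulfV.
apply: eq_up_to_phaseW.
under [X in psum _ _ X]functional_extensionality => r do rewrite zpow_fourier_inv.
rewrite psum_fourier_inv -fourier_inv_ch; congr fourier_inv.
by apply: functional_extensionality => i; exact: TE.
Qed.

End DualGroup.

Theorem mainTheorem1 (R : realType) (d : nat) (G : finZmodType)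
  (hcard : #|G| = d.+1) (S M : nat)
  (n : 'I_S -> 'I_M -> int) (a : 'I_S -> G)
  (hcons : consistent_system n a) (hnosol : ~ has_solution_in n a) :
  exists (mu : G -> G -> G -> R[i]) (eta : G -> R[i]),
    [/\ qs_comm_dagger_frobenius mu eta,
        strongly_complementary_X mu eta /\ (forall x : G, is_phase mu eta (ket x))
      & exists sigma : G -> G,
        iso_to_classical_points mu eta sigma /\ solvable_in_phases mu eta sigma n a].
Proof.
have [ch [chD ch_norm ch_inj]] := dual_group_exists R[i] G.
exists group_mu, group_eta; split.
- exact: group_frobenius.
- by split; [exact: group_strongly_complementary | exact: is_phase_ket].
exists id; split; first exact: iso_classical_points_id.
have solve_ch i : exists2 t : 'I_M -> R[i], forall r, `|t r| = 1 &
    forall s, \prod_r t r ^ n s r = ch i (a s).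
  apply: unit_circle_system_solvable => [s|c]; first exact: ch_norm.
  exact: consistent_ch_relation.
have [T T1 TE] := fin_all_exists2 solve_ch.
exact: (solvable_in_phases_dual chD ch_norm ch_inj T1 TE).
Qed.
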